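(* Let $\mathfrak{H}$ be a Hoffman graph in which every slim vertex has exactly one fat neighbour, and suppose $\mathcal{S}(\mathfrak{H})$ is isomorphic to $\mathcal{Q}_{p,q,r}$ for some non-negative integers $p,q,r$ with $p+q\le r$. Then $\mathfrak{H}$ is an induced Hoffman subgraph of a Hoffman graph $\mathfrak{H}'$ with $V^s(\mathfrak{H}')=V^s(\mathfrak{H})$ that has a decomposition $\{\mathfrak{H}^i\}_{i=1}^r$ in which every $\mathfrak{H}^i$ is isomorphic to $\mathfrak{H}_{\rm XVI}$, $\mathfrak{H}_{\rm XVII}$, or $\mathfrak{H}_{\rm II}$. In particular, if $r\ge2$ then $\mathfrak{H}$ is $(-1-\tau)$-reducible, where $\tau=\frac{1+\sqrt5}{2}$.
   Context: A Hoffman graph $\mathfrak{H}$ is a finite simple graph $H$ together with a labeling of each vertex as slim or fat, such that every fat vertex is adjacent to at least one slim vertex and the fat vertices are pairwise non-adjacent. $V^s(\mathfrak{H})$ denotes the set of slim vertices and $N^f_{\mathfrak{H}}(x)$ the set of fat neighbours of $x$. Isomorphisms of Hoffman graphs are graph isomorphisms preserving labels. An induced Hoffman subgraph is a Hoffman graph whose underlying graph is an induced subgraph with inherited labels. Writing the adjacency matrix of $H$ with fat vertices last as $\begin{pmatrix}A_s & C\\ C^T & O\end{pmatrix}$, set $B(\mathfrak{H})=A_s-CC^T$; $\lambda_{\min}(\mathfrak{H})$ is its smallest eigenvalue. A decomposition of $\mathfrak{H}$ is a family $\{\mathfrak{H}^i\}_{i=1}^n$ of induced Hoffman subgraphs such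 that: (i) $V(\mathfrak{H})=\bigcup_i V(\mathfrak{H}^i)$; (ii) slim vertex sets of distinct members are disjoint; (iii) if $x\in V^s(\mathfrak{H}^i)$ and $y$ is a fat neighbour of $x$ in $\mathfrak{H}$, then $y\in V(\mathfrak{H}^i)$; (iv) if $x\in V^s(\mathfrak{H}^i)$, $y\in V^s(\mathfrak{H}^j)$, $i\neq j$, then $|N^f_{\mathfrak{H}}(x)\cap N^f_{\mathfrak{H}}(y)|\le 1$, with equality iff $x,y$ are adjacent. For $\alpha<0$, a Hoffman graph $\mathfrak{H}$ with $\lambda_{\min}(\mathfrak{H})\ge\alpha$ is $\alpha$-reducible if there exist a Hoffman graph $\mathfrak{H}'$ containing $\mathfrak{H}$ as an induced Hoffman subgraph and a decomposition $\{\mathfrak{H}^1,\mathfrak{H}^2\}$ of $\mathfrak{H}'$ with $\lambda_{\min}(\mathfrak{H}^i)\ge\alpha$ and $V^s(\mathfrak{H}^i)\cap V^s(\mathfrak{H})\ne\emptyset$ for $i=1,2$. The special graph $\mathcal{S}(\mathfrak{H})$ is the edge-signed graph with vertex set $V^s(\mathfrak{H})$ in which distinct $u,v$ are joined by a $(+)$-edge iff adjacent in $\mathfrak{H}$ with no common fat neighbour, by a $(-)$-edge iff non-adjacent in $\mathfrak{H}$ with a common fat neighbour, and not joined otherwise. For $p+q\le r$, $\mathcal{Q}_{p,q,r}$ is the edge-signed graph with vertex set a disjoint union $V_p\cup V_q\cup V_r$ of sizes $p,q,r$, with disjoint $U_p,U_q\subseteq V_r$ of sizes $p,q$ and bijections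 $\sigma:V_p\to U_p$, $\rho:V_q\to U_q$; $(+)$-edges: all pairs of distinct vertices of $V_r$ and all $\{v,\sigma(v)\}$, $v\in V_p$; $(-)$-edges: all $\{v,\rho(v)\}$, $v\in V_q$; no other edges. Named Hoffman graphs: $\mathfrak{H}_{\rm II}$ has one slim vertex $v$, two fat vertices $f_1,f_2$, edges $\{v,f_1\},\{v,f_2\}$. $\mathfrak{H}_{\rm XVI}$ has slim vertices $v_1,v_2$, fat vertices $f_1,f_2,f_3$, edges $\{v_1,v_2\},\{v_1,f_1\},\{v_1,f_2\},\{v_2,f_3\}$. $\mathfrak{H}_{\rm XVII}$ has slim vertices $v_1,v_2$, fat vertices $f_1,f_2$, edges $\{v_1,f_1\},\{v_1,f_2\},\{v_2,f_2\}$. *)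

From HB Require Import structures.
From mathcomp Require Import all_boot all_order all_algebra all_field.
Set Implicit Arguments. Unset Strict Implicit. Unset Printing Implicit Defensive.
Import Order.TTheory GRing.Theory Num.Theory.
Local Open Scope ring_scope.

(* A Hoffman graph is given by a finite vertex type V, an adjacency relation
   adj and a labelling fat (true = fat, false = slim). *)

Definition simple_graph (V : finType) (adj : rel V) :=
  symmetric adj /\ irreflexive adj.

Definition hoffman_on (V : finType) (adj : rel V) (fat : pred V) (X : {set V}) :=
  (forall x y, x \in X -> y \in X -> fat x -> fat y -> ~~ adj x y) /\
  (forall x, x \in X -> fat x -> exists2 y, y \in X & ~~ fat y && adj x y).

Definition hoffman (V : finType) (adj : rel V) (fat : pred V) :=
  simple_graph adj /\ hoffman_on adj fat setT.

Definition fatN (V : finType) (adj : rel V) (fat : pred V) (x : V) : {set V} :=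
  [set y | fat y && adj x y].

Definition embeds (V V' : finType) (adj : rel V) (fat : pred V)
  (adj' : rel V') (fat' : pred V') (f : V -> V') :=
  injective f /\ (forall x y, adj' (f x) (f y) = adj x y) /\
  (forall x, fat' (f x) = fat x).

Definition iso_on (V : finType) (adj : rel V) (fat : pred V) (X : {set V})
  (W : finType) (adjW : rel W) (fatW : pred W) :=
  exists g : W -> V, [/\ injective g, (forall v, v \in X <-> exists w, g w = v),
    (forall w w', adj (g w) (g w') = adjW w w') & (forall w, fat (g w) = fatW w)].

(* A decomposition of (V,adj,fat) indexed by 'I_n, each member given by its
   vertex set S i (an induced Hoffman subgraph). *)
Definition decomposition (V : finType) (adj : rel V) (fat : pred V) (n : nat)
  (S : 'I_n -> {set V}) :=
  [/\ (forall i, hoffman_on adj fat (S i)),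
      (forall v, exists i, v \in S i),
      (forall i j v, i != j -> v \in S i -> v \in S j -> fat v),
      (forall i x y, x \in S i -> ~~ fat x -> fat y -> adj x y -> y \in S i) &
      (forall i j x y, i != j -> x \in S i -> ~~ fat x -> y \in S j -> ~~ fat y ->
         (#|fatN adj fat x :&: fatN adj fat y| <= 1)%N /\
         ((#|fatN adj fat x :&: fatN adj fat y| == 1%N) = adj x y))].

Definition slimset (V : finType) (fat : pred V) (X : {set V}) : {set V} :=
  [set v in X | ~~ fat v].

(* B = A_s - C C^T for the induced Hoffman subgraph on X, rows/cols indexed
   by its slim vertices (enumerated). *)
Definition Bmat (V : finType) (adj : rel V) (fat : pred V) (X : {set V})
  : 'M[algC]_#|slimset fat X| :=
  \matrix_(i, j)
    let u := enum_val i in let v := enum_val j in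
    (nat_of_bool (adj u v))%:R - #|[set w in X | fat w && adj u w && adj v w]|%:R.

Definition lmin_ge (V : finType) (adj : rel V) (fat : pred V) (X : {set V})
  (a : algC) :=
  forall l : algC, eigenvalue (Bmat adj fat X) l -> a <= l.

Definition reducible (V : finType) (adj : rel V) (fat : pred V) (a : algC) :=
  lmin_ge adj fat setT a /\
  exists (V' : finType) (adj' : rel V') (fat' : pred V') (f : V -> V')
         (S : 'I_2 -> {set V'}),
    [/\ hoffman adj' fat', embeds adj fat adj' fat' f,
        decomposition adj' fat' S &
        forall i, lmin_ge adj' fat' (S i) a /\
                  exists v, ~~ fat v /\ f v \in S i].

Definition spec_sign (V : finType) (adj : rel V) (fat : pred V) (u v : V) : int :=
  let c := #|fatN adj fat u :&: fatN adj fat v| in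
  if u == v then 0
  else if adj u v && (c == 0%N) then 1
  else if ~~ adj u v && (0 < c)%N then -1
  else 0.

(* Q_{p,q,r}: vertices V_p + V_q + V_r, sigma : V_p -> V_r, rho : V_q -> V_r *)
Definition QV (p q r : nat) : finType := (('I_p + 'I_q) + 'I_r)%type.

Definition Q_sign (p q r : nat) (sigma : 'I_p -> 'I_r) (rho : 'I_q -> 'I_r)
  (x y : QV p q r) : int :=
  match x, y with
  | inr a, inr b => if a != b then 1 else 0
  | inl (inl v), inr a | inr a, inl (inl v) => if sigma v == a then 1 else 0
  | inl (inr v), inr a | inr a, inl (inr v) => if rho v == a then -1 else 0
  | _, _ => 0
  end.

Definition special_iso_Q (V : finType) (adj : rel V) (fat : pred V)
  (p q r : nat) (sigma : 'I_p -> 'I_r) (rho : 'I_q -> 'I_r) :=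
  exists phi : QV p q r -> V,
    [/\ injective phi, (forall x, ~~ fat (phi x)),
        (forall v, ~~ fat v -> exists x, phi x = v) &
        (forall x y, spec_sign adj fat (phi x) (phi y) = Q_sign sigma rho x y)].

Definition edge_in (n : nat) (E : seq (nat * nat)) : rel 'I_n :=
  fun x y => ((val x, val y) \in E) || ((val y, val x) \in E).

Definition adjII : rel 'I_3 := edge_in [:: (0,1); (0,2)]%N.
Definition fatII : pred 'I_3 := fun x => (0 < val x)%N.
(* H_XVI: slim 0 (=v1), 1 (=v2); fat 2,3,4 (=f1,f2,f3) *)
Definition adjXVI : rel 'I_5 := edge_in [:: (0,1); (0,2); (0,3); (1,4)]%N.
Definition fatXVI : pred 'I_5 := fun x => (1 < val x)%N.
(* H_XVII: slim 0,1; fat 2,3 (=f1,f2) *)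
Definition adjXVII : rel 'I_4 := edge_in [:: (0,2); (0,3); (1,3)]%N.
Definition fatXVII : pred 'I_4 := fun x => (1 < val x)%N.

Definition tau : algC := (1 + sqrtC 5%:R) / 2%:R.

From HB Require Import structures.
From mathcomp Require Import all_boot all_order all_algebra all_field.
From mathcomp Require Import ring.
Set Implicit Arguments. Unset Strict Implicit. Unset Printing Implicit Defensive.
Import Order.TTheory GRing.Theory Num.Theory.
Local Open Scope ring_scope.

(* The slim vertices of H are phi x for x in V_p + V_q + V_r, and each x is
   "owned" by an index i of V_r: sigma v for x = v in V_p, rho w for x = w in
   V_q, and a itself for x = a in V_r.  We enlarge H to H' by one new fat vertex
   adjacent to the slim vertices phi a (a in V_r), and decompose H' into the
   members S_i (i in V_r): the new fat vertex, the slim vertices owned by i and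
   their fat neighbours.  S_i is H_XVI, H_XVII or H_II according as i is in the
   image of sigma, of rho, or of neither.

   For reducibility we use the Rayleigh criterion: lambda_min(H[X]) >= -c as soon
   as the hermitian form  y B y^* + c |y|^2  is non-negative.  For the three small
   pieces and c = 1 + tau this form is a square, because tau^2 = tau + 1; the
   form of a decomposition is the sum of the forms of its members; and the form
   of H is the form of H' plus a square.  Merging the members other than S_0
   gives the two-member decomposition needed when r >= 2.  For r = 0 the graph
   H is empty and the empty family is a decomposition. *)

Definition Bentry (V : finType) (adj : rel V) (fat : pred V) (X : {set V})
    (u v : V) : algC :=
  (nat_of_bool (adj u v))%:R - #|[set w in X | fat w && adj u w && adj v w]|%:R.

Definition Bform (V : finType) (adj : rel V) (fat : pred V) (X : {set V})
    (y : V -> algC) : algC :=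
  \sum_(u in slimset fat X) \sum_(v in slimset fat X)
     y u * Bentry adj fat X u v * (y v)^*.

Definition sqnorm (V : finType) (fat : pred V) (X : {set V}) (y : V -> algC)
    : algC :=
  \sum_(u in slimset fat X) y u * (y u)^*.

Definition form_bound (V : finType) (adj : rel V) (fat : pred V) (X : {set V})
    (c : algC) : Prop :=
  forall y, 0 <= Bform adj fat X y + c * sqnorm fat X y.

Section Rayleigh.

Variables (V : finType) (adj : rel V) (fat : pred V) (X : {set V}).
Let n := #|slimset fat X|.

Definition row_fun (v : 'rV[algC]_n) (u : V) : algC :=
  \sum_(i < n | enum_val i == u) v 0 i.

Lemma row_funE (v : 'rV[algC]_n) i : row_fun v (enum_val i) = v 0 i.
Proof.
rewrite /row_fun (big_pred1 i) // => j.
by apply/eqP/eqP => [/enum_val_inj | ->].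
Qed.

Lemma Bform_row (v : 'rV[algC]_n) :
  Bform adj fat X (row_fun v) =
  \sum_(i < n) \sum_(j < n) v 0 i * Bmat adj fat X i j * (v 0 j)^*.
Proof.
rewrite /Bform (big_enum_val (fun u => \sum_(w in slimset fat X)
  row_fun v u * Bentry adj fat X u w * (row_fun v w)^*)).
apply: eq_bigr => i _.
rewrite (big_enum_val (fun w => row_fun v (enum_val i) *
  Bentry adj fat X (enum_val i) w * (row_fun v w)^*)).
by apply: eq_bigr => j _; rewrite !row_funE mxE.
Qed.

Lemma sqnorm_row (v : 'rV[algC]_n) :
  sqnorm fat X (row_fun v) = \sum_(j < n) v 0 j * (v 0 j)^*.
Proof.
rewrite /sqnorm (big_enum_val (fun u => row_fun v u * (row_fun v u)^*)).
by apply: eq_bigr => j _; rewrite row_funE.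
Qed.

Lemma sqnorm_row_gt0 (v : 'rV[algC]_n) : v != 0 -> 0 < sqnorm fat X (row_fun v).
Proof.
move=> vn0; rewrite sqnorm_row lt_def sumr_ge0 ?andbT => [|j _];
  last exact: mul_conjC_ge0.
apply: contra vn0 => /eqP /psumr_eq0P vanish; apply/eqP/rowP => j.
have /eqP := vanish (fun i _ => mul_conjC_ge0 _) j isT.
by rewrite mul_conjC_eq0 mxE => /eqP.
Qed.

(* Rayleigh: an eigenvector v for l gives  v B v^* = l |v|^2. *)
Lemma lmin_ge_of_form_bound (c : algC) :
  form_bound adj fat X c -> lmin_ge adj fat X (- c).
Proof.
move=> hc l /eigenvalueP [v eig vn0].
have rayleigh : Bform adj fat X (row_fun v) = l * sqnorm fat X (row_fun v).
  rewrite Bform_row sqnorm_row mulr_sumr exchange_big /=.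
  apply: eq_bigr => j _.
  have := congr1 (fun M : 'rV_n => M 0 j) eig; rewrite !mxE => eig_j.
  by rewrite -mulr_suml mulrA -eig_j.
have := hc (row_fun v).
rewrite rayleigh -mulrDl pmulr_lge0 ?sqnorm_row_gt0 //.
by move=> lc_ge0; rewrite -subr_ge0 opprK.
Qed.

End Rayleigh.

Lemma tau_gt0 : 0 < tau.
Proof. by rewrite /tau divr_gt0 ?ltr0n // ltr_wpDr ?sqrtC_ge0 ?ler0n. Qed.

Lemma tau_conj : tau^* = tau.
Proof. by rewrite geC0_conj // ltW // tau_gt0. Qed.

Lemma tau_sq : tau * tau = tau + 1.
Proof.
have sqrt5 : sqrtC 5%:R * sqrtC (5%:R : algC) = 5%:R by rewrite -expr2 sqrtCK.
have -> : tau * tau = tau + 1 +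
    (sqrtC 5%:R * sqrtC (5%:R : algC) - 5%:R) / 4%:R by rewrite /tau; field.
by rewrite sqrt5 subrr mul0r addr0.
Qed.

Lemma tau_sub1 : tau - 1 = tau^-1.
Proof.
have tau_neq0 : tau != 0 by rewrite gt_eqF // tau_gt0.
by apply: (mulfI tau_neq0); rewrite divff // mulrBr tau_sq mulr1; ring.
Qed.

Lemma tau_sub1_ge0 : 0 <= tau - 1.
Proof. by rewrite tau_sub1 invr_ge0 ltW // tau_gt0. Qed.

(* The form of every two-vertex piece, shifted by 1 + tau: with e = +-1,
   (tau - 1)|a|^2 + 2 e Re(a conj b) + tau |b|^2 = (tau - 1) |a + e tau b|^2. *)
Lemma golden_form_ge0 (a b e : algC) : e * e = 1 -> e^* = e ->
  0 <= (tau - 1) * (a * a^*) + e * (a * b^* + b * a^*) + tau * (b * b^*).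
Proof.
move=> ee e_real.
have tau_inv : (tau - 1) * tau = 1 by rewrite tau_sub1 mulVf // gt_eqF ?tau_gt0.
have -> : (tau - 1) * (a * a^*) + e * (a * b^* + b * a^*) + tau * (b * b^*) =
    (tau - 1) * ((a + e * tau * b) * (a + e * tau * b)^*).
  rewrite rmorphD /= rmorphM /= rmorphM /= e_real tau_conj.
  have -> : (tau - 1) * ((a + e * tau * b) * (a^* + e * tau * b^*)) =
     (tau - 1) * (a * a^*) + ((tau - 1) * tau) * e * (a * b^* + b * a^*)
     + ((tau - 1) * tau) * tau * (e * e) * (b * b^*) by ring.
  by rewrite tau_inv ee; ring.
by rewrite mulr_ge0 ?tau_sub1_ge0 ?mul_conjC_ge0.
Qed.

Definition small_piece (V : finType) (adj : rel V) (fat : pred V) (X : {set V}) :=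
  [\/ iso_on adj fat X adjXVI fatXVI, iso_on adj fat X adjXVII fatXVII |
      iso_on adj fat X adjII fatII].

Lemma Bform_iso (V : finType) (adj : rel V) (fat : pred V) (X : {set V})
    (W : finType) (adjW : rel W) (fatW : pred W) (g : W -> V) :
  injective g -> (forall v, v \in X <-> exists w, g w = v) ->
  (forall w w', adj (g w) (g w') = adjW w w') -> (forall w, fat (g w) = fatW w) ->
  forall y, Bform adj fat X y = \sum_(w in [set w | ~~ fatW w])
     \sum_(w' in [set w | ~~ fatW w]) y (g w) * ((nat_of_bool (adjW w w'))%:R
        - #|[set z | fatW z && adjW w z && adjW w' z]|%:R) * (y (g w'))^*
   /\ sqnorm fat X y = \sum_(w in [set w | ~~ fatW w]) y (g w) * (y (g w))^*.
Proof.
move=> g_inj gX g_adj g_fat y.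
have slimE : slimset fat X = g @: [set w | ~~ fatW w].
  apply/setP => u; rewrite /slimset !inE; apply/andP/imsetP.
    by case=> /gX [w <-] fu; exists w; rewrite // inE -g_fat.
  by case=> w; rewrite inE => fw ->; split; [apply/gX; exists w | rewrite g_fat].
have countE w w' : #|[set z in X | fat z && adj (g w) z && adj (g w') z]|
    = #|[set z | fatW z && adjW w z && adjW w' z]|.
  rewrite -(card_imset _ g_inj); apply: eq_card => u; rewrite !inE.
  apply/idP/imsetP.
    by case/andP => /gX [z <-]; rewrite g_fat !g_adj => hz; exists z; rewrite ?inE.
  case=> z; rewrite inE => hz ->; rewrite g_fat !g_adj hz andbT.
  by apply/gX; exists z.
have g_inj_slim : {in [set w | ~~ fatW w] &, injective g} by move=> ? ? _ _ /g_inj.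
split; last by rewrite /sqnorm slimE big_imset.
rewrite /Bform slimE big_imset //; apply: eq_bigr => w _.
by rewrite big_imset //; apply: eq_bigr => w' _; rewrite /Bentry countE g_adj.
Qed.

Lemma card_set_ord n (P : pred 'I_n) :
  #|[set z | P z]| = \sum_(i < n) nat_of_bool (P i).
Proof.
rewrite -sum1_card big_mkcond; apply: eq_bigr => i _.
by rewrite inE; case: (P i).
Qed.

Lemma sum_slim_XVI (F : 'I_5 -> algC) :
  \sum_(w in [set w | ~~ fatXVI w]) F w = F ord0 + F (lift ord0 ord0).
Proof. by rewrite big_mkcond !big_ord_recl big_ord0 !inE /= !addr0. Qed.

Lemma sum_slim_XVII (F : 'I_4 -> algC) :
  \sum_(w in [set w | ~~ fatXVII w]) F w = F ord0 + F (lift ord0 ord0).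
Proof. by rewrite big_mkcond !big_ord_recl big_ord0 !inE /= !addr0. Qed.

Lemma sum_slim_II (F : 'I_3 -> algC) :
  \sum_(w in [set w | ~~ fatII w]) F w = F ord0.
Proof. by rewrite big_mkcond !big_ord_recl big_ord0 !inE /= !addr0. Qed.

Lemma small_piece_form_bound (V : finType) (adj : rel V) (fat : pred V)
    (X : {set V}) :
  small_piece adj fat X -> form_bound adj fat X (1 + tau).
Proof.
have sign_neg : (-1 : algC) * -1 = 1 /\ (-1 : algC)^* = -1.
  by rewrite mulrNN mulr1 rmorphN rmorph1.
case=> -[g [g_inj gX g_adj g_fat]] y;
  have [-> ->] := Bform_iso g_inj gX g_adj g_fat y;
  rewrite ?sum_slim_XVI ?sum_slim_XVII ?sum_slim_II !card_set_ord;
  rewrite !big_ord_recl !big_ord0 /=;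
  set a := y (g ord0); set b := y (g (lift ord0 ord0)).
- apply: le_trans (golden_form_ge0 a b (mulr1 1) (rmorph1 _)) _.
  by rewrite le_eqVlt; apply/predU1P; left; ring.
- apply: le_trans (golden_form_ge0 a b sign_neg.1 sign_neg.2) _.
  by rewrite le_eqVlt; apply/predU1P; left; ring.
- apply: le_trans (mulr_ge0 tau_sub1_ge0 (mul_conjC_ge0 a)) _.
  by rewrite le_eqVlt; apply/predU1P; left; ring.
Qed.

Section DecompositionForm.

Variables (V : finType) (adj : rel V) (fat : pred V) (n : nat).
Variables (S : 'I_n -> {set V}) (I : {set 'I_n}) (X : {set V}).

Hypothesis decS : decomposition adj fat S.
Hypothesis X_slim : forall u, ~~ fat u -> (u \in X) = [exists i in I, u \in S i].
Hypothesis S_sub : forall i, i \in I -> S i \subset X.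

Lemma count_fat_common (Y : {set V}) (u v : V) :
  (forall w, fat w -> adj u w -> w \in Y) ->
  #|[set w in Y | fat w && adj u w && adj v w]| =
  #|fatN adj fat u :&: fatN adj fat v|.
Proof.
move=> uY; apply: eq_card => w; rewrite !inE.
by case fw: (fat w); case uw: (adj u w); rewrite ?andbF //= uY.
Qed.

Lemma sum_slim_members (F : V -> algC) :
  \sum_(u in slimset fat X) F u = \sum_(i in I) \sum_(u in slimset fat (S i)) F u.
Proof.
have [_ _ slim_disj _ _] := decS.
rewrite (eq_bigr (fun i => \sum_u (if u \in slimset fat (S i) then F u else 0)));
  last by move=> i _; rewrite big_mkcond.
rewrite exchange_big /= big_mkcond; apply: eq_bigr => u _.
rewrite /slimset inE; case fu: (fat u) => /=.
  by rewrite andbF big1 // => i _; rewrite inE fu andbF.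
rewrite X_slim ?fu //; case: (boolP [exists i in I, u \in S i]).
  case/existsP => i /andP [iI uSi]; rewrite (bigD1 i) //= inE uSi fu /=.
  rewrite big1 ?addr0 // => j /andP [_ ji]; rewrite inE fu andbT.
  by case: ifP => // uSj; have := slim_disj _ _ _ ji uSj uSi; rewrite fu.
rewrite negb_exists => /forallP noS; rewrite big1 // => i iI; rewrite inE.
by have := noS i; rewrite iI /= => /negbTE ->.
Qed.

(* Entries of B between slim vertices of distinct members vanish: they are
   adjacent iff they share (exactly) one fat neighbour. *)
Lemma Bentry_cross i j u v : i != j -> u \in S i -> ~~ fat u ->
  v \in S j -> ~~ fat v -> i \in I -> Bentry adj fat X u v = 0.
Proof.
have [_ _ _ fatS cross] := decS.
move=> ij uSi fu vSj fv iI.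
rewrite /Bentry (count_fat_common (Y := X)); last first.
  by move=> w fw uw; apply: (subsetP (S_sub iI)); exact: fatS _ _ _ uSi fu fw uw.
have [le1 eq1] := cross i j u v ij uSi fu vSj fv.
apply/eqP; rewrite subr_eq0 eqr_nat -eq1.
by case: #|_| le1 => [|[|k]].
Qed.

Lemma Bform_members y :
  Bform adj fat X y = \sum_(i in I) Bform adj fat (S i) y /\
  sqnorm fat X y = \sum_(i in I) sqnorm fat (S i) y.
Proof.
have [_ _ _ fatS _] := decS.
split; last exact: sum_slim_members.
rewrite /Bform sum_slim_members; apply: eq_bigr => i iI.
apply: eq_bigr => u; rewrite inE => /andP [uSi fu].
rewrite sum_slim_members (bigD1 i) //= [X in _ + X]big1 ?addr0.
  apply: eq_bigr => v _; congr (_ * _ * _).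
  have uS w : fat w -> adj u w -> w \in S i by apply: fatS.
  rewrite /Bentry (count_fat_common (Y := X)) ?(count_fat_common (Y := S i)) //.
  by move=> w fw uw; apply: (subsetP (S_sub iI)); exact: uS.
move=> j /andP [_ ji]; apply: big1 => v; rewrite inE => /andP [vSj fv].
by rewrite (Bentry_cross _ uSi fu vSj fv iI) ?mulr0 ?mul0r // eq_sym.
Qed.

Lemma form_bound_members (c : algC) :
  (forall i, i \in I -> form_bound adj fat (S i) c) -> form_bound adj fat X c.
Proof.
move=> bound y; have [-> ->] := Bform_members y.
by rewrite mulr_sumr -big_split /= sumr_ge0 // => i iI; apply: bound.
Qed.

End DecompositionForm.

Lemma sum_option (R : nmodType) (V : finType) (F : option V -> R) :
  \sum_(w : option V) F w = F None + \sum_(x : V) F (Some x).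
Proof.
rewrite (bigD1 None) //=; congr (_ + _).
have -> : \sum_(x : V) F (Some x) = \sum_(w in Some @: [set: V]) F w.
  by rewrite big_imset /=; [apply: eq_bigl => x; rewrite inE | move=> x y _ _ []].
apply: eq_bigl => -[x|] /=; last by apply/esym/imsetP => -[].
by apply/esym/imsetP; exists x; rewrite ?inE.
Qed.

(* H enlarged by one fat vertex None adjacent exactly to the vertices in s. *)
Definition add_fat_adj (V : finType) (adj : rel V) (s : pred V) : rel (option V) :=
  fun a b => match a, b with
  | Some x, Some y => adj x y | Some x, None => s x | None, Some y => s y
  | None, None => false end.

Definition add_fat_fat (V : finType) (fat : pred V) : pred (option V) :=
  fun z => if z is Some x then fat x else true.

Section AddFatVertex.

Variables (V : finType) (adj : rel V) (fat : pred V) (s : pred V).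

Local Notation adj' := (add_fat_adj adj s).
Local Notation fat' := (add_fat_fat fat).

Lemma embeds_add_fat : embeds adj fat adj' fat' (@Some V).
Proof. by split; [move=> x y [] | split]. Qed.

Lemma slim_add_fat v' : ~~ fat' v' -> exists v, Some v = v'.
Proof. by case: v' => [v|] // _; exists v. Qed.

Lemma hoffman_add_fat : hoffman adj fat -> (forall x, s x -> ~~ fat x) ->
  (exists x, s x) -> hoffman adj' fat'.
Proof.
move=> [[adj_sym adj_irr] [fat_indep fat_nb_slim]] s_slim [x0 sx0].
split; first split.
- by move=> [x|] [y|] //=; rewrite adj_sym.
- by move=> [x|] //=; rewrite adj_irr.
split.
- move=> [x|] [y|] _ _ //= fx fy; first exact: fat_indep.
    by apply: contraL fx => /s_slim.
  by apply: contraL fy => /s_slim.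
- move=> [x|] _ /= fx; last by exists (Some x0); rewrite ?inE //= sx0 s_slim.
  have [y _ /andP [fy xy]] := fat_nb_slim x (in_setT x) fx.
  by exists (Some y); rewrite ?inE //= fy.
Qed.

Lemma sum_slim_option (G : option V -> algC) :
  \sum_(w in slimset fat' setT) G w = \sum_(x in slimset fat setT) G (Some x).
Proof.
rewrite big_mkcond sum_option [RHS]big_mkcond /= !inE /= add0r.
by apply: eq_bigr => x _; rewrite !inE.
Qed.

(* The new fat vertex adds -|sum_(u in s) y u|^2 to the form, so the form of H
   is that of H' plus a square. *)
Lemma Bform_add_fat (y : V -> algC) :
  let y' := fun w => if w is Some x then y x else 0 in
  let t := \sum_(u in slimset fat setT) (nat_of_bool (s u))%:R * y u in
  Bform adj fat setT y = Bform adj' fat' setT y' + t * t^* /\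
  sqnorm fat setT y = sqnorm fat' setT y'.
Proof.
move=> y' t; split; last by rewrite /sqnorm sum_slim_option.
have countE u v :
    #|[set w in setT | fat' w && adj' (Some u) w && adj' (Some v) w]| =
    (#|[set w in setT | fat w && adj u w && adj v w]| + (s u && s v))%N.
  rewrite -!sum1_card !(big_mkcond (fun w => _ \in _)) /= sum_option.
  rewrite !inE /= addnC; congr (_ + _)%N.
  by apply: eq_bigr => x _; rewrite !inE.
rewrite /Bform sum_slim_option /t rmorph_sum /= mulr_suml -big_split /=.
apply: eq_bigr => u _; rewrite sum_slim_option mulr_sumr -big_split /=.
apply: eq_bigr => v _; rewrite /Bentry /y' countE /= !rmorphM /=.
by rewrite rmorph_nat natrD; case: (s u); case: (s v) => /=; ring.
Qed.

Lemma lmin_of_extension n (S : 'I_n -> {set option V}) :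
  decomposition adj' fat' S -> (forall i, small_piece adj' fat' (S i)) ->
  lmin_ge adj fat setT (-1 - tau).
Proof.
move=> decS pieces; rewrite -opprD; apply: lmin_ge_of_form_bound => y.
have [-> ->] := Bform_add_fat y; rewrite addrAC addr_ge0 ?mul_conjC_ge0 //.
apply: (form_bound_members (I := setT) decS) => [u _|i _|i _].
- have [_ cover _ _ _] := decS; have [i ui] := cover u.
  by rewrite inE; apply/esym/existsP; exists i; rewrite inE.
- by apply/subsetP => z; rewrite inE.
- exact/small_piece_form_bound/pieces.
Qed.

End AddFatVertex.

Section MergeTwo.

Variables (V : finType) (adj : rel V) (fat : pred V) (n : nat).
Variables (S : 'I_n -> {set V}) (i0 : 'I_n).

Definition merge2 (k : 'I_2) : {set V} :=
  if val k == 0%N then S i0 else \bigcup_(i | i != i0) S i.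

Lemma merge2P k v :
  reflect (exists2 i, v \in S i & (i == i0) = (val k == 0%N)) (v \in merge2 k).
Proof.
rewrite /merge2; case: ifP => k0; apply: (iffP idP).
- by move=> vS; exists i0; rewrite ?eqxx.
- by case=> i vS ei; suff /eqP <- : i == i0 by []; rewrite ei.
- by case/bigcupP => i ii0 vS; exists i; rewrite // (negbTE ii0).
- by case=> i vS ii0; apply/bigcupP; exists i; rewrite ?ii0.
Qed.

(* Merging keeps all the axioms of a decomposition; disjointness and the
   cross condition hold because members on different sides are distinct. *)
Lemma merge2_dec : hoffman adj fat -> decomposition adj fat S ->
  decomposition adj fat merge2.
Proof.
move=> [_ [fat_indep _]] [hoffS cover slim_disj fatS cross].
have same_part (k k' : 'I_2) (i j : 'I_n) : k != k' -> (i == i0) = (val k == 0%N) ->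
    (j == i0) = (val k' == 0%N) -> i != j.
  move=> kk' ei ej; apply: contra kk' => /eqP ij; apply/eqP/val_inj.
  move: ej; rewrite -ij ei; clear.
  by case: k k' => [[|[|?] //] ?] [[|[|?] //] ?].
split.
- move=> k; split=> [x y _ _|x /merge2P [i xS ei] fx]; first exact: fat_indep.
  have [_ slim_nb] := hoffS i; have [z zS fz] := slim_nb x xS fx.
  by exists z => //; apply/merge2P; exists i.
- move=> v; have [i vS] := cover v.
  by exists (if i == i0 then ord0 else ord_max); apply/merge2P; exists i; case: (i == i0).
- move=> k k' v kk' /merge2P [i vi ei] /merge2P [j vj ej].
  exact: slim_disj (same_part _ _ _ _ kk' ei ej) vi vj.
- move=> k x y /merge2P [i xS ei] fx fy xy.
  by apply/merge2P; exists i => //; apply: fatS xS fx fy xy.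
- move=> k k' x y kk' /merge2P [i xS ei] fx /merge2P [j yS ej] fy.
  exact: cross (same_part _ _ _ _ kk' ei ej) xS fx yS fy.
Qed.

Lemma merge2_lmin : decomposition adj fat S ->
  (forall i, small_piece adj fat (S i)) ->
  forall k, lmin_ge adj fat (merge2 k) (-1 - tau).
Proof.
move=> decS pieces k; rewrite -opprD; apply: lmin_ge_of_form_bound.
rewrite /merge2; case: ifP => _; first exact/small_piece_form_bound/pieces.
apply: (form_bound_members (I := [set i | i != i0]) decS).
- move=> u _; apply/bigcupP/existsP => [[i ii0 ui]|[i /andP [ii0 ui]]].
    by exists i; rewrite inE ii0.
  by rewrite inE in ii0; exists i.
- by move=> i; rewrite inE => ii0; apply: bigcup_sup.
- by move=> i _; apply/small_piece_form_bound/pieces.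
Qed.

End MergeTwo.

Section OwnerQ.

Variables (p q r : nat) (sigma : 'I_p -> 'I_r) (rho : 'I_q -> 'I_r).

Definition owner (x : QV p q r) : 'I_r :=
  match x with inl (inl v) => sigma v | inl (inr w) => rho w | inr a => a end.

Definition in_Vr (x : QV p q r) : bool := if x is inr _ then true else false.

Lemma Q_sign_owner x y : owner x != owner y ->
  Q_sign sigma rho x y = if in_Vr x && in_Vr y then 1 else 0.
Proof.
by case: x => [[v|w]|a]; case: y => [[v'|w']|b] //= /negbTE;
  rewrite 1?eq_sym => ->.
Qed.

Hypotheses (sigma_inj : injective sigma) (rho_inj : injective rho).
Hypothesis sigma_rho : forall a b, sigma a != rho b.

Lemma owner_sigma x v : owner x = sigma v -> x = inr (sigma v) \/ x = inl (inl v).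
Proof.
case: x => [[v'|w]|a] /= e; [right | | by left; rewrite e].
  by rewrite (sigma_inj e).
by have := sigma_rho v w; rewrite e eqxx.
Qed.

Lemma owner_rho x w : owner x = rho w -> x = inr (rho w) \/ x = inl (inr w).
Proof.
case: x => [[v|w']|a] /= e; [ | right | by left; rewrite e].
  by have := sigma_rho v w; rewrite e eqxx.
by rewrite (rho_inj e).
Qed.

Lemma owner_free x i : (forall v, sigma v != i) -> (forall w, rho w != i) ->
  owner x = i -> x = inr i.
Proof.
move=> no_sigma no_rho; case: x => [[v|w]|a] //= e; last by rewrite e.
  by have := no_sigma v; rewrite e eqxx.
by have := no_rho w; rewrite e eqxx.
Qed.

End OwnerQ.

Definition fat_nb (V : finType) (adj : rel V) (fat : pred V) (u : V) : V :=
  odflt u [pick w in fatN adj fat u].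

Lemma fatN_single (V : finType) (adj : rel V) (fat : pred V) (u : V) :
  #|fatN adj fat u| = 1%N -> fatN adj fat u = [set fat_nb adj fat u].
Proof.
case/eqP/cards1P => z uz; rewrite uz /fat_nb; congr [set _].
case: pickP => [w|/(_ z)]; last by rewrite uz set11.
by rewrite uz => /set1P.
Qed.

Lemma inj_of_index (T : Type) n (g : 'I_n -> T) (k : T -> nat) :
  (forall w, k (g w) = val w) -> injective g.
Proof. by move=> gk w w' e; apply: val_inj; rewrite -gk e gk. Qed.

Record Q_setting (V : finType) (adj : rel V) (fat : pred V) (p q r : nat)
    (sigma : 'I_p -> 'I_r) (rho : 'I_q -> 'I_r) (phi : QV p q r -> V) : Prop := {
  set_hoffman : hoffman adj fat;
  set_one_fat : forall v, ~~ fat v -> #|fatN adj fat v| = 1%N;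
  set_sigma_inj : injective sigma;
  set_rho_inj : injective rho;
  set_sigma_rho : forall a b, sigma a != rho b;
  set_phi_inj : injective phi;
  set_phi_slim : forall x, ~~ fat (phi x);
  set_phi_onto : forall v, ~~ fat v -> exists x, phi x = v;
  set_phi_sign : forall x y, spec_sign adj fat (phi x) (phi y) = Q_sign sigma rho x y }.

Definition small_piece_decomposable (V : finType) (adj : rel V) (fat : pred V)
    (r : nat) : Prop :=
  exists (V' : finType) (adj' : rel V') (fat' : pred V') (f : V -> V')
         (S : 'I_r -> {set V'}),
    [/\ hoffman adj' fat', embeds adj fat adj' fat' f,
        (forall v', ~~ fat' v' -> exists v, f v = v'),
        decomposition adj' fat' S & forall i, small_piece adj' fat' (S i)].

Section Construction.

Variables (V : finType) (adj : rel V) (fat : pred V) (p q r : nat).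
Variables (sigma : 'I_p -> 'I_r) (rho : 'I_q -> 'I_r) (phi : QV p q r -> V).
Hypothesis C : Q_setting adj fat sigma rho phi.

Local Notation F x := (fat_nb adj fat (phi x)).
Local Notation owner := (owner sigma rho).

Lemma fatN_phi x : fatN adj fat (phi x) = [set F x].
Proof. exact/fatN_single/(set_one_fat C)/(set_phi_slim C). Qed.

Lemma fat_F x : fat (F x).
Proof. by have := set11 (F x); rewrite -fatN_phi inE => /andP []. Qed.

Lemma adj_phi_fat x w : fat w -> adj (phi x) w = (w == F x).
Proof.
move=> fw; apply/idP/eqP => [xw | ->]; first by apply/set1P; rewrite -fatN_phi inE fw.
by have := set11 (F x); rewrite -fatN_phi inE => /andP [].
Qed.

Lemma adj_fat_phi x w : fat w -> adj w (phi x) = (w == F x).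
Proof. by have [[adj_sym _] _] := set_hoffman C; rewrite adj_sym; apply: adj_phi_fat. Qed.

Lemma common_fat_phi x y :
  #|fatN adj fat (phi x) :&: fatN adj fat (phi y)| = (F x == F y).
Proof.
rewrite !fatN_phi; case: eqP => [->|ne]; first by rewrite setIid cards1.
apply/eqP; rewrite cards_eq0; apply/eqP/setP => w; rewrite !inE.
by apply/andP => -[/eqP -> /eqP].
Qed.

Lemma phi_sign_cases x y : x != y ->
  [/\ Q_sign sigma rho x y = 0 -> adj (phi x) (phi y) = (F x == F y),
      Q_sign sigma rho x y = 1 -> adj (phi x) (phi y) /\ F x != F y &
      Q_sign sigma rho x y = -1 -> ~~ adj (phi x) (phi y) /\ F x == F y].
Proof.
move=> xy; rewrite -(set_phi_sign C) /spec_sign (inj_eq (set_phi_inj C)).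
rewrite (negbTE xy) common_fat_phi.
by case: (adj _ _); case: (F x == F y).
Qed.

Definition Vr_image : pred V := fun v => [exists a, phi (inr a) == v].

Local Notation adj' := (add_fat_adj adj Vr_image).
Local Notation fat' := (add_fat_fat fat).

Lemma Vr_image_phi x : Vr_image (phi x) = in_Vr x.
Proof.
apply/existsP/idP => [[a /eqP /(set_phi_inj C) <-] // | ].
by case: x => // a _; exists a.
Qed.

Lemma Vr_image_fat w : fat w -> Vr_image w = false.
Proof.
move=> fw; apply/existsP => -[a /eqP e].
by have := set_phi_slim C (inr a); rewrite e fw.
Qed.

(* For r > 0 some phi a exists, so the new fat vertex has a slim neighbour. *)
Lemma hoffman_ext : (0 < r)%N -> hoffman adj' fat'.
Proof.
move=> r_gt0; apply: hoffman_add_fat; first exact: set_hoffman C.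
  by move=> v; apply: contraTN => /Vr_image_fat ->.
by exists (phi (inr (Ordinal r_gt0))); rewrite Vr_image_phi.
Qed.

Definition member (i : 'I_r) : {set option V} :=
  [set z | if z is Some y then
     [exists x, (owner x == i) && ((y == phi x) || (y == F x))] else true].

Lemma memberP i y : reflect (exists2 x, owner x = i & y = phi x \/ y = F x)
  (Some y \in member i).
Proof.
rewrite inE; apply: (iffP existsP).
  case=> x /andP [/eqP xi /orP [] /eqP e]; exists x => //; [left | right] => //.
case=> x xi e; exists x; rewrite xi eqxx /=.
by case: e => ->; rewrite eqxx ?orbT.
Qed.

Lemma member_None i : None \in member i.
Proof. by rewrite inE. Qed.

Lemma member_phi x i : (Some (phi x) \in member i) = (owner x == i).
Proof.
apply/memberP/eqP => [[x' <- [/(set_phi_inj C) -> // | e]] | <-].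
  by have := set_phi_slim C x; rewrite e fat_F.
by exists x => //; left.
Qed.

Lemma member_F x : Some (F x) \in member (owner x).
Proof. by apply/memberP; exists x => //; right. Qed.

Lemma slim_ext z : ~~ fat' z -> exists x, z = Some (phi x).
Proof. by case: z => //= y /(set_phi_onto C) [x <-]; exists x. Qed.

Lemma member_hoffman i : hoffman_on adj' fat' (member i).
Proof.
have [_ [fat_indep _]] := hoffman_ext (leq_ltn_trans (leq0n _) (ltn_ord i)).
split=> [x y _ _ | [y|] /= yS fy]; first by apply: fat_indep; rewrite inE.
  have [x xi [e | e]] := memberP _ _ yS.
    by have := set_phi_slim C x; rewrite -e fy.
  exists (Some (phi x)); first by rewrite member_phi xi.
  by rewrite /= (set_phi_slim C) e adj_fat_phi ?fat_F /=.
exists (Some (phi (inr i))); first by rewrite member_phi.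
by rewrite /= (set_phi_slim C) Vr_image_phi.
Qed.

Lemma member_cover (i0 : 'I_r) v : exists i, v \in member i.
Proof.
have [_ [_ fat_slim_nb]] := set_hoffman C.
case: v => [y|]; last by exists i0; apply: member_None.
case fy: (fat y); last first.
  by have [x <-] := set_phi_onto C (negbT fy); exists (owner x); rewrite member_phi.
have [u _ /andP [fu yu]] := fat_slim_nb y (in_setT y) fy.
have [x ex] := set_phi_onto C fu; exists (owner x).
by move: yu; rewrite -ex adj_fat_phi // => /eqP ->; apply: member_F.
Qed.

Lemma member_slim_disjoint i j z : i != j -> z \in member i -> z \in member j ->
  fat' z.
Proof.
case: z => [y|] // ij /memberP [x xi [ey|->]] /memberP [x' x'j [ey'|->]];
  rewrite /= ?fat_F //.
by move: ij; rewrite -xi -x'j ey in ey' *; rewrite (set_phi_inj C ey') eqxx.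
Qed.

Lemma member_fat_closed i x y : x \in member i -> ~~ fat' x -> fat' y ->
  adj' x y -> y \in member i.
Proof.
move=> xS /slim_ext [x' ex]; subst x; move: xS; rewrite member_phi => /eqP <-.
case: y => [y|] /= fy; last by rewrite member_None.
by rewrite adj_phi_fat // => /eqP ->; apply: member_F.
Qed.

Lemma common_fat_ext x y :
  #|fatN adj' fat' (Some (phi x)) :&: fatN adj' fat' (Some (phi y))| =
  ((in_Vr x && in_Vr y) + (F x == F y))%N.
Proof.
rewrite -common_fat_phi -!sum1_card big_mkcond [in RHS]big_mkcond sum_option /=.
rewrite !inE /= !Vr_image_phi; congr (_ + _)%N.
by apply: eq_bigr => w _; rewrite !inE.
Qed.

(* Between members, a (+)-edge of S(H) only joins two vertices of V_r, which
   then share the new fat vertex; all other pairs are edges of H exactly when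
   they share their fat neighbour. *)
Lemma member_cross i j x y : i != j -> x \in member i -> ~~ fat' x ->
  y \in member j -> ~~ fat' y ->
  (#|fatN adj' fat' x :&: fatN adj' fat' y| <= 1)%N /\
  (#|fatN adj' fat' x :&: fatN adj' fat' y| == 1%N) = adj' x y.
Proof.
move=> ij xS /slim_ext [x' ex] yS /slim_ext [y' ey]; subst x y.
move: xS yS; rewrite !member_phi => /eqP oi /eqP oj.
have owners : owner x' != owner y' by rewrite oi oj.
have x'y' : x' != y' by apply: contraNneq owners => ->.
have [sign0 sign1 _] := phi_sign_cases x'y'.
rewrite common_fat_ext /=; move: (Q_sign_owner owners).
case: (in_Vr x' && in_Vr y') => /= [/sign1 [-> /negbTE ->] | /sign0 ->] //.
by case: (F x' == F y').
Qed.

Lemma decomposition_ext (i0 : 'I_r) : decomposition adj' fat' member.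
Proof.
split; [exact: member_hoffman | exact: member_cover i0 |
  exact: member_slim_disjoint | exact: member_fat_closed | exact: member_cross].
Qed.

Lemma fat_phi x : fat (phi x) = false.
Proof. exact/negbTE/(set_phi_slim C). Qed.

Lemma adj_phi_F x y : adj (phi x) (F y) = (F y == F x).
Proof. exact/adj_phi_fat/fat_F. Qed.

Lemma adj_F_phi x y : adj (F y) (phi x) = (F y == F x).
Proof. exact/adj_fat_phi/fat_F. Qed.

Lemma adj_F_F x y : adj (F x) (F y) = false.
Proof.
have [_ [fat_indep _]] := set_hoffman C.
by apply/negbTE/fat_indep; rewrite ?inE ?fat_F.
Qed.

Lemma adj_phi_phi x : adj (phi x) (phi x) = false.
Proof. by have [[_ adj_irr] _] := set_hoffman C; apply: adj_irr. Qed.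

Lemma Vr_image_F x : Vr_image (F x) = false.
Proof. exact/Vr_image_fat/fat_F. Qed.

Lemma F_neq_phi x y : (F x == phi y) = false.
Proof. by apply/negbTE; apply: contraFN (fat_phi y) => /eqP <-; apply: fat_F. Qed.

Definition adj_extE :=
  (adj_phi_F, adj_F_phi, adj_F_F, adj_phi_phi, Vr_image_phi, Vr_image_F).

(* If i = sigma v, the member S_i is H_XVI: phi i is joined to phi v and they
   have distinct fat neighbours. *)
Lemma member_XVI v : iso_on adj' fat' (member (sigma v)) adjXVI fatXVI.
Proof.
pose a : QV p q r := inr (sigma v); pose b : QV p q r := inl (inl v).
have [ab /negbTE Fab] : adj (phi a) (phi b) /\ F a != F b.
  by have [_ sign1 _] := @phi_sign_cases a b isT; apply: sign1; rewrite /= eqxx.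
have ba : adj (phi b) (phi a) by have [[adj_sym _] _] := set_hoffman C; rewrite adj_sym.
have Fba : (F b == F a) = false by rewrite eq_sym.
pose g (w : 'I_5) : option V := match val w with
  | 0 => Some (phi a) | 1 => Some (phi b) | 2 => Some (F a) | 3 => None
  | _ => Some (F b) end.
exists g; split.
- pose k (z : option V) : nat := if z is Some y then
    (if y == phi a then 0 else if y == phi b then 1 else if y == F a then 2 else 4)
    else 3.
  apply: (inj_of_index (k := k)) => -[[|[|[|[|[|m]]]]] hm] //=; rewrite /k.
  + by rewrite eqxx.
  + by rewrite (inj_eq (set_phi_inj C)) eqxx.
  + by rewrite !F_neq_phi eqxx.
  + by rewrite !F_neq_phi Fba.
- move=> z; split; last first.
    by case=> -[[|[|[|[|[|m]]]]] hm] <-;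
      rewrite /= ?member_phi ?member_F ?member_None.
  case: z => [y|_]; last by exists (Ordinal (isT : (3 < 5)%N)).
  case/memberP => x /(owner_sigma (set_sigma_inj C) (set_sigma_rho C)) [] -> [] ->.
  + by exists (Ordinal (isT : (0 < 5)%N)).
  + by exists (Ordinal (isT : (2 < 5)%N)).
  + by exists (Ordinal (isT : (1 < 5)%N)).
  + by exists (Ordinal (isT : (4 < 5)%N)).
- by move=> -[[|[|[|[|[|m]]]]] hm] -[[|[|[|[|[|m']]]]] hm'] //=;
    rewrite ?adj_extE ?eqxx ?Fab ?Fba ?ab ?ba.
- by move=> -[[|[|[|[|[|m]]]]] hm] //=; rewrite ?fat_phi ?fat_F.
Qed.

(* If i = rho w, the member S_i is H_XVII: phi i and phi w are non-adjacent
   and share their fat neighbour. *)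
Lemma member_XVII w : iso_on adj' fat' (member (rho w)) adjXVII fatXVII.
Proof.
pose a : QV p q r := inr (rho w); pose b : QV p q r := inl (inr w).
have [/negbTE ab Fab] : ~~ adj (phi a) (phi b) /\ F a == F b.
  by have [_ _ sign_neg] := @phi_sign_cases a b isT; apply: sign_neg; rewrite /= eqxx.
have ba : adj (phi b) (phi a) = false.
  by have [[adj_sym _] _] := set_hoffman C; rewrite adj_sym.
have Fba : F b == F a by rewrite eq_sym.
pose g (u : 'I_4) : option V := match val u with
  | 0 => Some (phi a) | 1 => Some (phi b) | 2 => None | _ => Some (F a) end.
exists g; split.
- pose k (z : option V) : nat :=
    if z is Some y then (if y == phi a then 0 else if y == phi b then 1 else 3)
    else 2.
  apply: (inj_of_index (k := k)) => -[[|[|[|[|m]]]] hm] //=; rewrite /k.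
  + by rewrite eqxx.
  + by rewrite (inj_eq (set_phi_inj C)) eqxx.
  + by rewrite !F_neq_phi.
- move=> z; split; last first.
    by case=> -[[|[|[|[|m]]]] hm] <-;
      rewrite /= ?member_phi ?member_F ?member_None.
  case: z => [y|_]; last by exists (Ordinal (isT : (2 < 4)%N)).
  case/memberP => x /(owner_rho (set_rho_inj C) (set_sigma_rho C)) [] -> [] ->.
  + by exists (Ordinal (isT : (0 < 4)%N)).
  + by exists (Ordinal (isT : (3 < 4)%N)).
  + by exists (Ordinal (isT : (1 < 4)%N)).
  + by exists (Ordinal (isT : (3 < 4)%N)); rewrite /= (eqP Fba).
- by move=> -[[|[|[|[|m]]]] hm] -[[|[|[|[|m']]]] hm'] //=;
    rewrite ?adj_extE ?eqxx ?Fab ?Fba ?ab ?ba.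
- by move=> -[[|[|[|[|m]]]] hm] //=; rewrite ?fat_phi ?fat_F.
Qed.

(* If i is in neither image, the member S_i is H_II: phi i with its own fat
   neighbour and the new fat vertex. *)
Lemma member_II i : (forall v, sigma v != i) -> (forall w, rho w != i) ->
  iso_on adj' fat' (member i) adjII fatII.
Proof.
move=> no_sigma no_rho; pose a : QV p q r := inr i.
pose g (u : 'I_3) : option V := match val u with
  | 0 => Some (phi a) | 1 => Some (F a) | _ => None end.
exists g; split.
- pose k (z : option V) : nat :=
    if z is Some y then (if y == phi a then 0 else 1) else 2.
  apply: (inj_of_index (k := k)) => -[[|[|[|m]]] hm] //=; rewrite /k.
  + by rewrite eqxx.
  + by rewrite F_neq_phi.
- move=> z; split; last first.
    by case=> -[[|[|[|m]]] hm] <-;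
      rewrite /= ?member_phi ?member_F ?member_None.
  case: z => [y|_]; last by exists (Ordinal (isT : (2 < 3)%N)).
  case/memberP => x /(owner_free no_sigma no_rho) -> [] ->.
  + by exists (Ordinal (isT : (0 < 3)%N)).
  + by exists (Ordinal (isT : (1 < 3)%N)).
- by move=> -[[|[|[|m]]] hm] -[[|[|[|m']]] hm'] //=; rewrite ?adj_extE ?eqxx.
- by move=> -[[|[|[|m]]] hm] //=; rewrite ?fat_phi ?fat_F.
Qed.

Lemma member_small_piece i : small_piece adj' fat' (member i).
Proof.
case: (pickP (fun v => sigma v == i)) => [v /eqP <- | no_sigma].
  by apply: Or31; apply: member_XVI.
case: (pickP (fun w => rho w == i)) => [w /eqP <- | no_rho].
  by apply: Or32; apply: member_XVII.
by apply: Or33; apply: member_II => [v | w]; rewrite ?no_sigma ?no_rho.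
Qed.

Lemma small_piece_decomposable_ext : (0 < r)%N ->
  small_piece_decomposable adj fat r.
Proof.
move=> r_gt0; exists (option V), adj', fat', (@Some V), member; split.
- exact: hoffman_ext.
- exact: embeds_add_fat.
- exact: slim_add_fat.
- exact: decomposition_ext (Ordinal r_gt0).
- exact: member_small_piece.
Qed.

Lemma reducible_ext : (1 < r)%N -> reducible adj fat (-1 - tau).
Proof.
move=> r_gt1; have r_gt0 := ltnW r_gt1.
pose i0 := Ordinal r_gt0; pose i1 := Ordinal r_gt1.
have dec := decomposition_ext i0.
split; first exact: lmin_of_extension dec member_small_piece.
exists (option V), adj', fat', (@Some V), (merge2 member i0); split.
- exact: hoffman_ext.
- exact: embeds_add_fat.
- exact: merge2_dec (hoffman_ext r_gt0) dec.
move=> k; split; first exact: merge2_lmin dec member_small_piece k.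
pose i := if val k == 0%N then i0 else i1.
exists (phi (inr i)); split; first by rewrite fat_phi.
apply/merge2P; exists i; first by rewrite member_phi.
by rewrite /i; case: (val k == 0%N); rewrite ?eqxx.
Qed.

End Construction.

(* For r = 0 there is no slim vertex, hence no vertex at all. *)
Lemma Q_setting_r0_empty (V : finType) (adj : rel V) (fat : pred V) (p q : nat)
    (sigma : 'I_p -> 'I_0) (rho : 'I_q -> 'I_0) (phi : QV p q 0 -> V) :
  Q_setting adj fat sigma rho phi -> V -> False.
Proof.
move=> C; have no_slim v : ~~ fat v -> False.
  by case/(set_phi_onto C) => -[[v'|w]|[]] _ //; [case: (sigma v') | case: (rho w)].
have [_ [_ fat_slim_nb]] := set_hoffman C.
move=> v; case: (boolP (fat v)) => [fv | /no_slim //].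
by have [y _ /andP [/no_slim]] := fat_slim_nb v (in_setT v) fv.
Qed.

Lemma small_piece_decomposable_empty (V : finType) (adj : rel V) (fat : pred V) :
  hoffman adj fat -> (V -> False) -> small_piece_decomposable adj fat 0.
Proof.
move=> hoff noV; exists V, adj, fat, id, (fun _ => set0).
split; [exact: hoff | by split | by move=> v' _; exists v' | | by case].
split.
- by move=> i; split=> x; rewrite inE.
- by move=> v; case: (noV v).
- by move=> i j v; case: (noV v).
- by move=> i v; case: (noV v).
- by move=> i j v; case: (noV v).
Qed.

Unset Implicit Arguments. Set Strict Implicit.

Theorem mainTheorem12 (V : finType) (adj : rel V) (fat : pred V)
  (p q r : nat) (sigma : 'I_p -> 'I_r) (rho : 'I_q -> 'I_r) :
  hoffman adj fat ->
  (forall v, ~~ fat v -> #|fatN adj fat v| = 1%N) ->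
  (p + q <= r)%N ->
  injective sigma -> injective rho ->
  (forall a b, sigma a != rho b) ->
  special_iso_Q adj fat sigma rho ->
  (exists (V' : finType) (adj' : rel V') (fat' : pred V') (f : V -> V')
          (S : 'I_r -> {set V'}),
     [/\ hoffman adj' fat', embeds adj fat adj' fat' f,
         (forall v', ~~ fat' v' -> exists v, f v = v'),
         decomposition adj' fat' S &
         forall i, [\/ iso_on adj' fat' (S i) adjXVI fatXVI,
                       iso_on adj' fat' (S i) adjXVII fatXVII |
                       iso_on adj' fat' (S i) adjII fatII]]) /\
  ((1 < r)%N -> reducible adj fat (-1 - tau)).
Proof.
move=> hoff one_fat _ sigma_inj rho_inj sigma_rho [phi [phi_inj phi_slim phi_onto phi_sign]].
have C : Q_setting adj fat sigma rho phi by split.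
split; last exact: reducible_ext C.
have [r0 | r_gt0] := posnP r; last exact: small_piece_decomposable_ext C r_gt0.
by subst r; apply: small_piece_decomposable_empty hoff (Q_setting_r0_empty C).
Qed.
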